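(* Let $(f,\bar{f})\colon (G,P_G)\to (H,P_H)$ be a regular epimorphism in $\mathsf{PreOrdGrp}$ (i.e. both $f\colon G\to H$ and $\bar f\colon P_G\to P_H$ are surjective). The following conditions are equivalent: (1) (i) $\mathsf{Ker}(f)\subseteq Z(G)$ (the center of $G$), and (ii) for all $a,b,c\in P_G$ with $\eta_G(a)=\eta_G(b)$ and $f(b)=f(c)$, one has $a-b+c\in P_G$; (2) $(f,\bar f)$ is a $\Gamma_C$-normal extension.
   Context: A preordered group is a pair $(G,P_G)$ where $G$ is a group (written additively, not necessarily abelian) and $P_G\subseteq G$ is a submonoid closed under conjugation in $G$ (the positive cone). A morphism $(f,\bar f)\colon (G,P_G)\to(H,P_H)$ is a group homomorphism $f\colon G\to H$ with $f(P_G)\subseteq P_H$, $\bar f$ being its restriction $P_G\to P_H$. This gives the category $\mathsf{PreOrdGrp}$; $\mathsf{PreOrdAb}$ is its full subcategory of those $(G,P_G)$ with $G$ abelian. Limits in $\mathsf{PreOrdGrp}$ are computed componentwise (e.g. the pullback of $(f,\bar f)$ and $(g,\bar g)$ is the pair of the group pullback and the monoid pullback of the positive cones), and the regular (= normal = effective descent) epimorphisms are exactly the morphisms $(f,\bar f)$ with both $f$ and $\bar f$ surjective. For a group $G$, $\eta_G\colon G\to G/[G,G]$ is the abelianization quotient. The functor $C\colon\mathsf{PreOrdGrp}\to\mathsf{PreOrdAb}$, $C(G,P_G)=(G/[G,G],\eta_G(P_G))$, is left adjoint to the inclusion $V$, with unit $(\eta_G,\bar\eta_G)$, $\bar\eta_G\colon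 P_G\to\eta_G(P_G)$ the restriction. A morphism $(f,\bar f)\colon X\to Y$ which is a regular epimorphism is a $\Gamma_C$-trivial extension if the naturality square formed by $(f,\bar f)$, the units $X\to VC(X)$, $Y\to VC(Y)$ and $VC(f,\bar f)$ is a pullback in $\mathsf{PreOrdGrp}$. A regular epimorphism $(f,\bar f)$ is a $\Gamma_C$-normal extension if the first projection of its kernel pair $(\pi_1,\bar\pi_1)\colon (Eq(f),Eq(\bar f))\to (G,P_G)$ is a $\Gamma_C$-trivial extension, where $Eq(f)=\{(x,y)\in G\times G: f(x)=f(y)\}$ and $Eq(\bar f)=Eq(f)\cap(P_G\times P_G)$. *)

From Stdlib Require Import ClassicalEpsilon ProofIrrelevance.

Set Implicit Arguments.
Unset Strict Implicit.

Record Group := {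
  gcar :> Type;
  gadd : gcar -> gcar -> gcar;
  gzero : gcar;
  gopp : gcar -> gcar;
  gaddA : forall x y z, gadd x (gadd y z) = gadd (gadd x y) z;
  gadd0x : forall x, gadd gzero x = x;
  gaddx0 : forall x, gadd x gzero = x;
  gaddNx : forall x, gadd (gopp x) x = gzero;
  gaddxN : forall x, gadd x (gopp x) = gzero
}.
Arguments gzero : clear implicits.

Declare Scope grp_scope.
Delimit Scope grp_scope with grp.
Notation "x + y" := (@gadd _ x y) : grp_scope.
Notation "- x" := (@gopp _ x) : grp_scope.
Notation "x - y" := (@gadd _ x (@gopp _ y)) : grp_scope.
Open Scope grp_scope.

Record hom (G H : Group) := {
  hfun :> G -> H;
  hmorph : forall x y, hfun (x + y) = hfun x + hfun y
}.

Lemma gcancel_r (G : Group) (a b c : G) : a + c = b + c -> a = b.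
Proof.
  intro E. rewrite <- (gaddx0 a), <- (gaddx0 b), <- (gaddxN c), !gaddA, E.
  reflexivity.
Qed.

Lemma hom0 (G H : Group) (f : hom G H) : f (gzero G) = gzero H.
Proof.
  apply (gcancel_r (c := f (gzero G))). rewrite <- hmorph, gadd0x, gadd0x.
  reflexivity.
Qed.

Lemma homN (G H : Group) (f : hom G H) (x : G) : f (- x) = - f x.
Proof.
  apply (gcancel_r (c := f x)). rewrite <- hmorph, gaddNx, gaddNx, hom0.
  reflexivity.
Qed.

(* Preordered groups: positive cone = submonoid closed under conjugation *)

Record PreOrdGroup := {
  pgrp :> Group;
  cone : pgrp -> Prop;
  cone0 : cone (gzero pgrp);
  coneD : forall x y, cone x -> cone y -> cone (x + y);
  coneJ : forall g x, cone x -> cone (g + x - g)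
}.
Arguments cone : clear implicits.

(* morphisms of PreOrdGrp: group homomorphisms mapping P_G into P_H;
   the restriction \bar f is implicit (it is f on the cone) *)
Record pmor (X Y : PreOrdGroup) := {
  pm :> hom X Y;
  pm_cone : forall x, cone X x -> cone Y (pm x)
}.

Definition regular_epi (X Y : PreOrdGroup) (f : pmor X Y) : Prop :=
  (forall y : Y, exists x : X, f x = y) /\
  (forall y : Y, cone Y y -> exists x : X, cone X x /\ f x = y).

Definition in_center (G : Group) (z : G) : Prop := forall g : G, g + z = z + g.
Definition in_ker (G H : Group) (f : hom G H) (x : G) : Prop := f x = gzero H.

Definition is_subgroup (G : Group) (S : G -> Prop) : Prop :=
  S (gzero G) /\ (forall x y, S x -> S y -> S (x + y)) /\ (forall x, S x -> S (- x)).

Definition commutator (G : Group) (a b : G) : G := a + b - a - b.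

Definition in_comm_sub (G : Group) (x : G) : Prop :=
  forall S : G -> Prop, is_subgroup S -> (forall a b, S (commutator a b)) -> S x.

Definition ab_class (G : Group) (x : G) : G -> Prop := fun y => in_comm_sub (x - y).

(* underlying set of G/[G,G]: the set of cosets *)
Definition ab_car (G : Group) : Type := { S : G -> Prop | exists x : G, S = ab_class x }.

Definition eta (G : Group) (x : G) : ab_car G :=
  exist (fun S => exists x : G, S = ab_class x) (ab_class x) (ex_intro _ x eq_refl).

Arguments eta : clear implicits.

Definition ab_rep (G : Group) (s : ab_car G) : G :=
  proj1_sig (constructive_indefinite_description _ (proj2_sig s)).

Definition ab_map (G H : Group) (f : hom G H) (s : ab_car G) : ab_car H :=
  eta H (f (ab_rep s)).

Definition ab_cone (X : PreOrdGroup) (s : ab_car X) : Prop :=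
  exists x : X, cone X x /\ eta X x = s.

(* Pullback squares in PreOrdGrp (computed componentwise):             *)
(*        A --p--> B                                                   *)
(*        |u       |v                                                  *)
(*        C --q--> D                                                   *)
(* is a pullback iff it commutes, the group part is a pullback of sets *)
(* (canonical comparison map bijective) and the cone part is a         *)
(* pullback of the positive cones.                                     *)

Definition is_pullback (A B C D : Type)
  (PA : A -> Prop) (PB : B -> Prop) (PC : C -> Prop)
  (p : A -> B) (u : A -> C) (v : B -> D) (q : C -> D) : Prop :=
  (forall a, v (p a) = q (u a)) /\
  (forall b c, v b = q c -> exists a, (p a = b /\ u a = c) /\
                              forall a', p a' = b /\ u a' = c -> a' = a) /\
  (forall b c, PB b -> PC c -> v b = q c -> exists a, PA a /\ p a = b /\ u a = c).

Definition trivial_ext (X Y : PreOrdGroup) (f : pmor X Y) : Prop :=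
  regular_epi f /\
  is_pullback (cone X) (cone Y) (@ab_cone X)
    f (@eta X) (@eta Y) (ab_map f).

Lemma sig_eq (A : Type) (P : A -> Prop) (x y : sig P) :
  proj1_sig x = proj1_sig y -> x = y.
Proof.
  destruct x as [x Hx], y as [y Hy]; simpl; intro E; subst y.
  f_equal; apply proof_irrelevance.
Qed.

Section KernelPair.
Variables (X Y : PreOrdGroup) (f : pmor X Y).

Definition kp_car : Type := { p : X * X | f (fst p) = f (snd p) }.

Definition kp_add (p q : kp_car) : kp_car.
Proof.
  refine (exist _ (fst (proj1_sig p) + fst (proj1_sig q),
                   snd (proj1_sig p) + snd (proj1_sig q)) _).
  simpl. rewrite !hmorph, (proj2_sig p), (proj2_sig q). reflexivity.
Defined.

Definition kp_zero : kp_car := exist _ (gzero X, gzero X) eq_refl.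

Definition kp_opp (p : kp_car) : kp_car.
Proof.
  refine (exist _ (- fst (proj1_sig p), - snd (proj1_sig p)) _).
  simpl. rewrite !homN, (proj2_sig p). reflexivity.
Defined.

Definition kp_group : Group.
Proof.
  refine (@Build_Group kp_car kp_add kp_zero kp_opp _ _ _ _ _);
  intros; apply sig_eq; simpl;
  repeat match goal with p : kp_car |- _ => destruct p as [[? ?] ?] end; simpl;
  f_equal; auto using gaddA, gadd0x, gaddx0, gaddNx, gaddxN.
Defined.

Definition kp_cone (p : kp_group) : Prop :=
  cone X (fst (proj1_sig p)) /\ cone X (snd (proj1_sig p)).

Definition kernel_pair : PreOrdGroup.
Proof.
  refine (@Build_PreOrdGroup kp_group kp_cone _ _ _).
  - split; apply cone0.
  - intros [[a b] ?] [[c d] ?] [H1 H2] [H3 H4]; split; simpl in *; apply coneD; auto.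
  - intros [[g h] ?] [[a b] ?] [H1 H2]; split; simpl in *; apply coneJ; auto.
Defined.

Definition kp_proj1_hom : hom kernel_pair X.
Proof.
  refine (@Build_hom kernel_pair X (fun p : kp_car => fst (proj1_sig p)) _).
  intros; reflexivity.
Defined.

Definition kp_proj1 : pmor kernel_pair X.
Proof.
  refine (@Build_pmor kernel_pair X kp_proj1_hom _).
  intros p [H1 _]; exact H1.
Defined.

End KernelPair.

Definition normal_ext (X Y : PreOrdGroup) (f : pmor X Y) : Prop :=
  regular_epi f /\ trivial_ext (kp_proj1 f).

(* A class of Eq(f)^ab over eta(g) always has a representative of the form
   (g, y): translate any representative (x, y) by the diagonal element
   (g - x, g - x), whose class is trivial because g - x lies in [G,G].  So the
   group part of the naturality square of pi_1 is a pullback iff two pairs with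
   the same first component and the same class in Eq(f)^ab coincide.  The map
   (x, y) |-> -x + y lands in Ker f; if Ker f is central it is a homomorphism
   killing commutators, which gives uniqueness.  Conversely the commutator of
   (0, k) and (g, g) has first component 0 and trivial class, so uniqueness
   forces k to commute with g.  Given uniqueness, the lift over a of the class of
   a cone pair (b, c) is (a, a - b + c), so the cone part of the pullback is
   exactly condition (ii). *)

From Stdlib Require Import ClassicalEpsilon FunctionalExtensionality PropExtensionality.
Set Implicit Arguments.
Unset Strict Implicit.

Section GroupFacts.
Context {G : Group}.
Implicit Types a b : G.

Lemma gaddKx a b : - a + (a + b) = b.
Proof. rewrite gaddA, gaddNx, gadd0x; reflexivity. Qed.

Lemma gaddxNK a b : (a - b) + b = a.
Proof. rewrite <- gaddA, gaddNx, gaddx0; reflexivity. Qed.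

Lemma gaddxKN a b : (a + b) - b = a.
Proof. rewrite <- gaddA, gaddxN, gaddx0; reflexivity. Qed.

Lemma gopp0 : - gzero G = gzero G.
Proof. rewrite <- (gadd0x (- gzero G)), gaddxN; reflexivity. Qed.

Lemma goppD a b : - (a + b) = - b + - a.
Proof.
  apply (gcancel_r (c := a + b)).
  rewrite gaddNx, <- gaddA, gaddKx, gaddNx; reflexivity.
Qed.

Lemma gsub_eq0 a b : a - b = gzero G -> a = b.
Proof. intro E. rewrite <- (gaddxNK a b), E, gadd0x; reflexivity. Qed.

Lemma gcancel_l a b c : a + b = a + c -> b = c.
Proof. intro E. rewrite <- (gaddKx a b), E, gaddKx; reflexivity. Qed.

Lemma commutator_eq0 a b : commutator a b = gzero G -> a + b = b + a.
Proof.
  unfold commutator. intro E.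
  apply gsub_eq0 in E. rewrite <- E at 2. rewrite gaddxNK; reflexivity.
Qed.

End GroupFacts.

Section CommutatorSubgroup.
Context {G : Group}.

Lemma in_comm_sub_subgroup : is_subgroup (@in_comm_sub G).
Proof.
  split; [|split].
  - intros S [S0 _] _; exact S0.
  - intros x y Hx Hy S HS Hc. apply HS; [apply Hx | apply Hy]; assumption.
  - intros x Hx S HS Hc. apply HS, Hx; assumption.
Qed.

Lemma in_comm_sub0 : in_comm_sub (gzero G).
Proof. apply in_comm_sub_subgroup. Qed.

Lemma in_comm_subD (x y : G) : in_comm_sub x -> in_comm_sub y -> in_comm_sub (x + y).
Proof. apply in_comm_sub_subgroup. Qed.

Lemma in_comm_subN (x : G) : in_comm_sub x -> in_comm_sub (- x).
Proof. apply in_comm_sub_subgroup. Qed.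

Lemma in_comm_sub_commutator (a b : G) : in_comm_sub (commutator a b).
Proof. intros S _ Hc; apply Hc. Qed.

Lemma eta_eq_iff (x y : G) : eta G x = eta G y <-> in_comm_sub (x - y).
Proof.
  split.
  - intro E. apply (f_equal (@proj1_sig _ _)) in E. simpl in E.
    assert (Hy : ab_class y y) by (unfold ab_class; rewrite gaddxN; apply in_comm_sub0).
    rewrite <- E in Hy; exact Hy.
  - intro Hxy. apply sig_eq; simpl.
    apply functional_extensionality; intro z.
    apply propositional_extensionality; unfold ab_class.
    replace (x - z) with ((x - y) + (y - z)) by (rewrite gaddA, gaddxNK; reflexivity).
    split; intro H.
    + rewrite <- (gaddKx (x - y) (y - z)).
      apply in_comm_subD; [apply in_comm_subN |]; assumption.
    + apply in_comm_subD; assumption.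
Qed.

Lemma eta_ab_rep (s : ab_car G) : eta G (ab_rep s) = s.
Proof.
  unfold ab_rep. destruct (constructive_indefinite_description _ _) as [x Hx]; simpl.
  apply sig_eq; simpl; symmetry; exact Hx.
Qed.

End CommutatorSubgroup.

Lemma in_comm_sub_hom (G H : Group) (h : hom G H) (z : G) :
  in_comm_sub z -> in_comm_sub (h z).
Proof.
  intro Hz. apply (Hz (fun z => in_comm_sub (h z))).
  - split; [|split].
    + rewrite hom0; apply in_comm_sub0.
    + intros x y Hx Hy; rewrite hmorph; apply in_comm_subD; assumption.
    + intros x Hx; rewrite homN; apply in_comm_subN; assumption.
  - intros a b. unfold commutator. rewrite !hmorph, !homN.
    apply in_comm_sub_commutator.
Qed.

Lemma hom_comm_sub_eq0 (G H : Group) (h : hom G H) (z : G) :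
  (forall x, in_center (h x)) -> in_comm_sub z -> h z = gzero H.
Proof.
  intros Hcent Hz. apply (Hz (fun z => h z = gzero H)).
  - split; [|split].
    + apply hom0.
    + intros x y Hx Hy; rewrite hmorph, Hx, Hy, gadd0x; reflexivity.
    + intros x Hx; rewrite homN, Hx; apply gopp0.
  - intros a b. unfold commutator. rewrite !hmorph, !homN.
    rewrite <- (Hcent a (h b)), gaddxKN, gaddxN; reflexivity.
Qed.

Lemma ab_map_eta (G H : Group) (h : hom G H) (a : G) :
  ab_map h (eta G a) = eta H (h a).
Proof.
  unfold ab_map. apply eta_eq_iff.
  assert (E := eta_ab_rep (eta G a)). apply eta_eq_iff in E.
  apply (in_comm_sub_hom h) in E. rewrite hmorph, homN in E. exact E.
Qed.

Section KernelPairProjection.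
Variables (X Y : PreOrdGroup) (f : pmor X Y).

Local Notation pr1 a := (fst (proj1_sig a)).
Local Notation pr2 a := (snd (proj1_sig a)).

Definition kp_diag : hom X (kernel_pair f).
Proof.
  refine (@Build_hom X (kernel_pair f) (fun x => exist _ (x, x) eq_refl) _).
  intros; apply sig_eq; reflexivity.
Defined.

Definition eta_pr1_injective : Prop :=
  forall a a' : kernel_pair f,
    eta _ a = eta _ a' -> pr1 a = pr1 a' -> a = a'.

Lemma kp_proj1_regular_epi : regular_epi (kp_proj1 f).
Proof.
  split.
  - intro x. exists (kp_diag x). reflexivity.
  - intros x Hx. exists (kp_diag x). split; [split; exact Hx | reflexivity].
Qed.

Lemma kp_lift (w : kernel_pair f) (b : X) : eta X b = eta X (pr1 w) ->
  exists a : kernel_pair f,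
    pr1 a = b /\ pr2 a = b - pr1 w + pr2 w /\ eta _ a = eta _ w.
Proof.
  intro E. apply eta_eq_iff in E.
  exists (kp_diag (b - pr1 w) + w). split; [|split].
  - apply gaddxNK.
  - reflexivity.
  - apply eta_eq_iff. rewrite gaddxKN. apply in_comm_sub_hom. exact E.
Qed.

Lemma kp_pullback_exists (b : X) (c : ab_car (kernel_pair f)) :
  eta X b = ab_map (kp_proj1 f) c ->
  exists a : kernel_pair f, pr1 a = b /\ eta _ a = c.
Proof.
  rewrite <- (eta_ab_rep c), ab_map_eta. intro E.
  destruct (kp_lift E) as [a [Ha1 [_ Ha]]]. exists a; split; assumption.
Qed.

Section CentralKernel.
Hypothesis Hcent : forall k : X, in_ker f k -> in_center k.

Lemma kp_diff_central (a : kernel_pair f) : in_center (- pr1 a + pr2 a).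
Proof.
  apply Hcent. destruct a as [[x y] Exy]; unfold in_ker; simpl in *.
  rewrite hmorph, homN, Exy, gaddNx; reflexivity.
Qed.

Definition kp_diff : hom (kernel_pair f) X.
Proof.
  refine (@Build_hom (kernel_pair f) X (fun a => - pr1 a + pr2 a) _).
  intros a b. pose proof (kp_diff_central a (- pr1 b)) as C.
  destruct a as [[x1 y1] ?], b as [[x2 y2] ?]; cbn in *.
  rewrite goppD, <- (gaddA (- x2) (- x1) (y1 + y2)), (gaddA (- x1) y1 y2),
    (gaddA (- x2) (- x1 + y1) y2), C, <- gaddA.
  reflexivity.
Defined.

Lemma central_kernel_eta_pr1_injective : eta_pr1_injective.
Proof.
  intros a a' E E1.
  apply eta_eq_iff, (hom_comm_sub_eq0 (h := kp_diff) kp_diff_central) in E.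
  rewrite hmorph, homN in E. apply gsub_eq0 in E. cbn in E.
  rewrite E1 in E. apply gcancel_l in E.
  destruct a as [[x y] ?], a' as [[x' y'] ?]; apply sig_eq; simpl in *. congruence.
Qed.

End CentralKernel.

Lemma eta_pr1_injective_central_kernel :
  eta_pr1_injective -> forall k : X, in_ker f k -> in_center k.
Proof.
  intros Hinj k Hk g.
  assert (Ek : f (gzero X) = f k) by (rewrite hom0; symmetry; exact Hk).
  set (u := exist _ (gzero X, k) Ek : kernel_pair f).
  assert (Hu : commutator u (kp_diag g) = gzero _).
  { apply Hinj.
    - apply eta_eq_iff. rewrite gopp0, gaddx0. apply in_comm_sub_commutator.
    - cbn. rewrite gopp0, gaddx0, gadd0x, gaddxN; reflexivity. }
  apply (f_equal (fun a : kernel_pair f => pr2 a)) in Hu.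
  symmetry. apply commutator_eq0. exact Hu.
Qed.

Lemma kp_group_pullback_iff :
  eta_pr1_injective <->
  (forall (b : X) (c : ab_car (kernel_pair f)), eta X b = ab_map (kp_proj1 f) c ->
     exists a, (kp_proj1 f a = b /\ eta _ a = c) /\
       forall a', kp_proj1 f a' = b /\ eta _ a' = c -> a' = a).
Proof.
  split.
  - intros Hinj b c E. destruct (kp_pullback_exists E) as [a [Ha1 Ha]].
    exists a. split; [split; assumption |].
    intros a' [Ha1' Ha']. apply Hinj; [congruence |].
    change (pr1 a' = b) in Ha1'. congruence.
  - intros Hpb a a' E E1.
    destruct (Hpb (pr1 a) (eta _ a) (eq_sym (ab_map_eta (kp_proj1 f) a)))
      as [a0 [_ U]].
    rewrite (U a), (U a'); [reflexivity | split | split]; try reflexivity.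
    + exact (eq_sym E1).
    + exact (eq_sym E).
Qed.

Definition cone_condition : Prop :=
  forall a b c : X, cone X a -> cone X b -> cone X c ->
    eta X a = eta X b -> f b = f c -> cone X (a - b + c).

Definition kp_cone_lifts : Prop :=
  forall (b : X) (c : ab_car (kernel_pair f)),
    cone X b -> ab_cone c -> eta X b = ab_map (kp_proj1 f) c ->
    exists a, cone (kernel_pair f) a /\ kp_proj1 f a = b /\ eta _ a = c.

Lemma cone_condition_iff_kp_cone_lifts :
  eta_pr1_injective -> (cone_condition <-> kp_cone_lifts).
Proof.
  intro Hinj. split.
  - intros Hcone b c Hb [w [[Hw1 Hw2] <-]] E. rewrite ab_map_eta in E.
    destruct (kp_lift E) as [a [Ha1 [Ha2 Ha]]].
    exists a. split; [split | split; assumption].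
    + cbn. rewrite Ha1. exact Hb.
    + cbn. rewrite Ha2. apply Hcone; try assumption. exact (proj2_sig w).
  - intros Hlifts a b c Ha Hb Hc Eab Fbc.
    set (w := exist _ (b, c) Fbc : kernel_pair f).
    destruct (Hlifts a (eta _ w) Ha (ex_intro _ w (conj (conj Hb Hc) eq_refl)))
      as [a' [[_ Ha'] [Ha1' Ea']]]; [rewrite ab_map_eta; exact Eab |].
    change (pr1 a' = a) in Ha1'.
    destruct (kp_lift (w := w) Eab) as [a'' [Ha1'' [Ha2'' Ea'']]].
    assert (E : a' = a'') by (apply Hinj; congruence).
    rewrite E, Ha2'' in Ha'. exact Ha'.
Qed.

End KernelPairProjection.

Theorem theorem2p9 (X Y : PreOrdGroup) (f : pmor X Y) (Hf : regular_epi f) :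
  ((forall k : X, in_ker f k -> in_center k) /\
   (forall a b c : X, cone X a -> cone X b -> cone X c ->
      eta X a = eta X b -> f b = f c -> cone X (a - b + c)))
  <-> normal_ext f.
Proof.
  split.
  - intros [Hcent Hcone].
    pose proof (central_kernel_eta_pr1_injective Hcent) as Hinj.
    split; [exact Hf |]. split; [apply kp_proj1_regular_epi |]. split; [|split].
    + intro a. symmetry. apply ab_map_eta.
    + exact (proj1 (kp_group_pullback_iff f) Hinj).
    + exact (proj1 (cone_condition_iff_kp_cone_lifts Hinj) Hcone).
  - intros [_ [_ [_ [Hgrp Hlifts]]]].
    apply kp_group_pullback_iff in Hgrp.
    split.
    + exact (eta_pr1_injective_central_kernel Hgrp).
    + exact (proj2 (cone_condition_iff_kp_cone_lifts Hgrp) Hlifts).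
Qed.
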